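(* Let $(X,Y)$ be a conditionally dependent (CD) random vector with function $s$ on $(0,\infty)$. If $X$ is independent of $Y$, then $s(y)=1$ for all $y\in D_Y$. Conversely, $s(y)=1$ for all $y\in D_Y$ does not imply independence of $X$ and $Y$: there exist CD random vectors $(X,Y)$ with $s\equiv1$ on $D_Y$ for which $X$ and $Y$ are not independent.
   Context: $X$ is real-valued with distribution $F$ such that $\overline F(x)=1-F(x)>0$ for all $x\in\mathbb{R}$, and $Y$ takes values in $(0,\infty)$. Let $D_Y=\{y\in(0,\infty):\mathrm P(Y\in(y-\delta,y+\delta))>0\ \forall\delta>0\}$. For $x\in\mathbb{R}$ and $y\in D_Y$, $\mathrm P(X>x\mid Y=y)=\lim_{t\downarrow0}\mathrm P(X>x,Y\in[y,y+t))/\mathrm P(Y\in[y,y+t))$ when this limit exists. $(X,Y)$ is conditionally dependent (CD) with function $s$ if $s$ is a positive measurable function such that these conditional tails exist and $\lim_{x\to\infty}\sup_{y\in D_Y}|\mathrm P(X>x\mid Y=y)/(\overline F(x)s(y))-1|=0$. *)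

From HB Require Import structures.
From mathcomp Require Import all_boot all_order all_algebra.
From mathcomp Require Import all_classical all_reals all_analysis.
Set Implicit Arguments. Unset Strict Implicit. Unset Printing Implicit Defensive.
Import Order.TTheory GRing.Theory Num.Theory.
Import numFieldNormedType.Exports.
Local Open Scope classical_set_scope.
Local Open Scope ring_scope.

Section CD.
Context {R : realType} {d : measure_display} {T : measurableType d}.
Variable (P : probability T R).

Definition prob (A : set T) : R := fine (P A).

Definition tailF (X : T -> R) (x : R) : R := prob [set w | x < X w].

Definition DY (Y : T -> R) : set R :=
  [set y | 0 < y /\ forall δ : R, 0 < δ ->
     0 < prob [set w | y - δ < Y w < y + δ]].

Definition cond_ratio (X Y : T -> R) (x y t : R) : R :=
  prob [set w | x < X w /\ y <= Y w < y + t] / prob [set w | y <= Y w < y + t].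

Definition cond_tail_exists (X Y : T -> R) (x y : R) : Prop :=
  (\forall t \near 0^'+, 0 < prob [set w | y <= Y w < y + t]) /\
  cvg (cond_ratio X Y x y @ 0^'+).

(* P(X > x | Y = y), meaningful when cond_tail_exists X Y x y *)
Definition cond_tail (X Y : T -> R) (x y : R) : R :=
  lim (cond_ratio X Y x y @ 0^'+).

Definition standing (X Y : T -> R) : Prop :=
  measurable_fun setT X /\ measurable_fun setT Y /\
  (forall x : R, 0 < tailF X x) /\ (forall w, 0 < Y w).

(* (X,Y) is CD with function s (s positive measurable function on (0,oo));
   the uniform convergence  sup_{y in D_Y} |..-1| -> 0  is written out. *)
Definition CD (X Y : T -> R) (s : R -> R) : Prop :=
  measurable_fun [set y : R | 0 < y] s /\
  (forall y, 0 < y -> 0 < s y) /\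
  (forall x y, DY Y y -> cond_tail_exists X Y x y) /\
  (forall eps : R, 0 < eps -> exists x0 : R, forall x, x0 < x ->
     forall y, DY Y y ->
       `| cond_tail X Y x y / (tailF X x * s y) - 1 | <= eps).

Definition indep (X Y : T -> R) : Prop :=
  forall A B : set R, measurable A -> measurable B ->
    P (X @^-1` A `&` Y @^-1` B) = (P (X @^-1` A) * P (Y @^-1` B))%E.

End CD.

From HB Require Import structures.
From mathcomp Require Import all_boot all_order all_algebra.
From mathcomp Require Import all_classical all_reals all_analysis.
From mathcomp Require Import ring lra measurable_realfun.
Set Implicit Arguments. Unset Strict Implicit. Unset Printing Implicit Defensive.
Import Order.TTheory GRing.Theory Num.Theory.
Import numFieldNormedType.Exports.
Local Open Scope classical_set_scope.
Local Open Scope ring_scope.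

(* If X and Y are independent, every ratio P(X > x, Y in [y, y+t)) / P(Y in [y, y+t))
   equals Fbar(x), so the CD condition says that |1/s(y) - 1| is as small as we
   like, i.e. s(y) = 1.
   For the converse take w uniform on [0, 1], Y = 1 on [0, 1/2) and Y = 2 on
   [1/2, 1], and X = -ln|2w - 1| except X = -1 on [3/4, 1].  For x >= ln 2 the
   event {X > x} is {0 < |2w - 1| < e^-x}, which lies inside (1/4, 3/4) and has
   probability e^-x / 2 on each half, so both conditional tails equal
   Fbar(x) = e^-x and s = 1.  Yet X < 0 happens only when Y = 2. *)

Section conditional_tail.
Context {R : realType} {d : measure_display} {T : measurableType d}.
Variable P : probability T R.
Implicit Types (X Y : T -> R) (x y : R).

Lemma cond_tail_near_cst X Y x y c :
  (\forall t \near 0^'+, cond_ratio P X Y x y t = c) ->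
  cvg (cond_ratio P X Y x y @ 0^'+) /\ cond_tail P X Y x y = c.
Proof.
move=> ratio_c; split; last exact: norm_lim_near_cst.
by apply/cvg_ex; exists c; exact: cvg_near_cst.
Qed.

Lemma cond_tail_level_near_cst X Y x y (B : set T) :
  (\forall t \near 0^'+, [set w | y <= Y w < y + t] = B) -> 0 < prob P B ->
  cond_tail_exists P X Y x y /\
  cond_tail P X Y x y = prob P ([set w | x < X w] `&` B) / prob P B.
Proof.
move=> levelB PB; have [cvg_ratio ->] : cvg (cond_ratio P X Y x y @ 0^'+) /\
    cond_tail P X Y x y = prob P ([set w | x < X w] `&` B) / prob P B.
  by apply: cond_tail_near_cst; apply: filterS levelB => t <-.
by split=> //; split=> //; apply: filterS levelB => t ->.
Qed.

Lemma cond_ratio_indep X Y x y t :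
  measurable_fun setT X -> measurable_fun setT Y -> indep P X Y ->
  0 < prob P [set w | y <= Y w < y + t] -> cond_ratio P X Y x y t = tailF P X x.
Proof.
move=> mX mY XY Pt.
have Yin : [set w | y <= Y w < y + t] = Y @^-1` `[y, y + t[.
  by apply/seteqP; split => w /=; rewrite in_itv.
have mXgt : measurable (X @^-1` `]x, +oo[) by rewrite -[_ @^-1` _]setTI; exact: mX.
have mYin : measurable (Y @^-1` `[y, y + t[) by rewrite -[_ @^-1` _]setTI; exact: mY.
rewrite /cond_ratio /tailF /prob.
rewrite -[[set w | _ /\ _]]/([set w | x < X w] `&` [set w | y <= Y w < y + t]).
rewrite -preimage_itvoy Yin XY // in Pt *.
by rewrite fineM ?fin_num_measure // mulfK ?gt_eqF.
Qed.

Lemma cond_tail_indep X Y x y :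
  measurable_fun setT X -> measurable_fun setT Y -> indep P X Y ->
  cond_tail_exists P X Y x y -> cond_tail P X Y x y = tailF P X x.
Proof.
move=> mX mY XY [Pt _].
have ratioF : \forall t \near 0^'+, cond_ratio P X Y x y t = tailF P X x.
  by apply: filterS Pt => t; exact: cond_ratio_indep.
exact: (cond_tail_near_cst ratioF).2.
Qed.

Lemma indep_CD_eq1 X Y s : standing P X Y -> CD P X Y s -> indep P X Y ->
  forall y, DY P Y y -> s y = 1.
Proof.
move=> [mX [mY [Fpos _]]] [_ [spos [ex unif]]] XY y Dy.
have sy0 := spos y Dy.1.
have close e : 0 < e -> `|(s y)^-1 - 1| <= e.
  move=> e0; have [x0 Hx0] := unif e e0.
  have x0_lt : x0 < x0 + 1 by rewrite ltrDl.
  have := Hx0 _ x0_lt y Dy.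
  rewrite cond_tail_indep //; last exact: ex.
  by rewrite invfM mulrA mulfV ?mul1r // gt_eqF ?Fpos.
have : `|(s y)^-1 - 1| <= 0 by apply/ler_addgt0Pr => e /close; rewrite add0r.
by rewrite normr_le0 subr_eq0 invr_eq1 => /eqP.
Qed.

Lemma tailF_le X x x' : measurable_fun setT X -> x <= x' ->
  tailF P X x' <= tailF P X x.
Proof.
move=> mX xx'; have mXgt z : measurable [set w | z < X w].
  by rewrite -[X in measurable X]setTI -preimage_itvoy; exact: mX.
apply: fine_le; rewrite ?fin_num_measure //; apply: le_measure; rewrite ?inE //.
by move=> w /=; exact: le_lt_trans.
Qed.

Lemma DY_near_range Y y : DY P Y y ->
  forall e, 0 < e -> exists w, `|Y w - y| < e.
Proof.
move=> [_ PY] e e0.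
have : [set w | y - e < Y w < y + e] != set0.
  by apply: contraTneq (PY e e0) => ->; rewrite /prob measure0 ltxx.
by move/set0P => [w Yw]; exists w; rewrite distrC ltr_distlC.
Qed.

End conditional_tail.

Lemma expRN_le_half (R : realType) (x : R) : ln 2 <= x -> expR (- x) <= 2^-1.
Proof.
have -> : 2^-1 = expR (- ln 2) :> R by rewrite expRN lnK // posrE.
by rewrite ler_expR lerN2.
Qed.

Section uniform01.
Context {R : realType}.

Definition uniform01 : probability _ R := uniform_prob (@ltr01 R).

Lemma uniform01E (A : set R) : measurable A ->
  uniform01 A = lebesgue_measure (A `&` `[0, 1]).
Proof.
move=> mA; rewrite /= /uniform_prob integral_uniform_pdf.
rewrite (eq_integral (fun _ => 1%:E)); last first.
  move=> w; rewrite inE => -[_ /=]; rewrite in_itv /= /uniform_pdf => ->.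
  by rewrite subr0 invr1.
by rewrite integral_cst ?mul1e //; apply: measurableI.
Qed.

Lemma uniform01_itv (A : set R) (b1 b2 : bool) (a b : R) : measurable A ->
  A `&` `[0, 1] = [set` Interval (BSide b1 a) (BSide b2 b)] -> a <= b ->
  uniform01 A = (b - a)%:E.
Proof.
move=> mA A01 ab; rewrite uniform01E // A01 lebesgue_measure_itv /= lte_fin.
by case: ltgtP ab => // -> _; rewrite subrr.
Qed.

Lemma uniform01_itv_oo (a b : R) : 0 <= a -> a <= b -> b <= 1 ->
  uniform01 `]a, b[%classic = (b - a)%:E.
Proof.
move=> a0 ab b1; apply: uniform01_itv => //; apply/setIidl => w /=.
by rewrite !in_itv /= => /andP[aw wb]; apply/andP; split; lra.
Qed.

Lemma uniform01_lt_half : uniform01 `]-oo, 2^-1[%classic = (2^-1)%:E.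
Proof.
rewrite (@uniform01_itv _ true true 0 2^-1) ?subr0 //.
apply/seteqP; split => w /=; rewrite !in_itv /=.
  by move=> [w_lt /andP[w0 _]]; apply/andP.
by move=> /andP[w0 w_lt]; split=> //; apply/andP; split; lra.
Qed.

Lemma uniform01_ge_half : uniform01 `[2^-1, +oo[%classic = (2^-1)%:E.
Proof.
rewrite (@uniform01_itv _ true false 2^-1 1) //; last by lra.
  by congr (_%:E); lra.
apply/seteqP; split => w /=; rewrite !in_itv /= ?andbT.
  by move=> [w_ge /andP[_ w1]]; apply/andP.
by move=> /andP[w_ge w1]; split=> //; apply/andP; split; lra.
Qed.

End uniform01.

Section counterexample.
Context {R : realType}.

Definition cexY (w : R) : R := if w < 2^-1 then 1 else 2.
Definition cexX (w : R) : R := if 3 / 4 <= w then -1 else - ln `|2 * w - 1|.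

Lemma measurable_cexY : measurable_fun setT cexY.
Proof.
apply: measurable_fun_if => //.
by apply: measurable_fun_ltr; [exact: measurable_id | exact: measurable_cst].
Qed.

Lemma measurable_cexX : measurable_fun setT cexX.
Proof.
apply: measurable_fun_if => //.
- by apply: measurable_fun_ler; [exact: measurable_cst | exact: measurable_id].
- apply: measurable_funTS; apply: measurable_funN.
  apply: measurableT_comp (@measurable_ln R) _.
  apply: measurableT_comp (@normr_measurable R setT) _.
  by apply: measurable_funB.
Qed.

Lemma measurable_cexX_gt (x : R) : measurable [set w | x < cexX w].
Proof.
by rewrite -[X in measurable X]setTI -preimage_itvoy; exact: measurable_cexX.
Qed.

Lemma cexX_gt (x w : R) : ln 2 <= x ->
  (x < cexX w) = (0 < `|2 * w - 1| < expR (- x)).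
Proof.
move=> x_ge; have e_le := expRN_le_half x_ge.
have x0 : 0 <= x by apply: le_trans x_ge; rewrite ln_ge0 // ler1n.
rewrite /cexX; case: (leP (3 / 4) w) => w34.
  have -> : (x < -1) = false by apply/negbTE; rewrite -leNgt; lra.
  by apply/esym/negbTE/negP => /andP[_]; rewrite ger0_norm; lra.
have [->|w_ne] := eqVneq (2 * w - 1) 0; first by rewrite normr0 ln0 // ltxx; lra.
have w_pos : 0 < `|2 * w - 1| by rewrite normr_gt0.
by rewrite w_pos ltrNr -ltr_expR lnK.
Qed.

Lemma cexX_gt_left (x : R) : ln 2 <= x ->
  [set w | x < cexX w] `&` `]-oo, 2^-1[%classic =
  `]2^-1 - expR (- x) / 2, 2^-1[%classic.
Proof.
move=> x_ge; have e_le := expRN_le_half x_ge.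
apply/seteqP; split => w /=; rewrite !in_itv /= cexX_gt //.
  move=> [/andP[_ e_gt] w_lt]; rewrite ltr0_norm in e_gt; last lra.
  by apply/andP; split; lra.
move=> /andP[? ?]; rewrite ltr0_norm; last lra.
by split=> //; apply/andP; split; lra.
Qed.

Lemma cexX_gt_right (x : R) : ln 2 <= x ->
  [set w | x < cexX w] `&` `[2^-1, +oo[%classic =
  `]2^-1, 2^-1 + expR (- x) / 2[%classic.
Proof.
move=> x_ge; have e_le := expRN_le_half x_ge.
apply/seteqP; split => w /=; rewrite !in_itv /= cexX_gt // andbT.
  move=> [/andP[w_pos e_gt] w_ge].
  have w_gt : 2^-1 < w.
    rewrite lt_neqAle w_ge andbT; apply: contraTneq w_pos => <-.
    by rewrite mulfV // subrr normr0 ltxx.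
  by rewrite gtr0_norm in e_gt; [apply/andP; split|]; lra.
move=> /andP[? ?]; rewrite gtr0_norm; last lra.
by split; [apply/andP; split|]; lra.
Qed.

Lemma prob_cexX_gt_left (x : R) : ln 2 <= x ->
  prob uniform01 ([set w | x < cexX w] `&` `]-oo, 2^-1[%classic) = expR (- x) / 2.
Proof.
move=> x_ge; have e_le := expRN_le_half x_ge; have e_pos := expR_gt0 (- x).
by rewrite cexX_gt_left // /prob uniform01_itv_oo /=; lra.
Qed.

Lemma prob_cexX_gt_right (x : R) : ln 2 <= x ->
  prob uniform01 ([set w | x < cexX w] `&` `[2^-1, +oo[%classic) = expR (- x) / 2.
Proof.
move=> x_ge; have e_le := expRN_le_half x_ge; have e_pos := expR_gt0 (- x).
by rewrite cexX_gt_right // /prob uniform01_itv_oo /=; lra.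
Qed.

Lemma tailF_cexX (x : R) : ln 2 <= x -> tailF uniform01 cexX x = expR (- x).
Proof.
move=> x_ge; have mXgt := measurable_cexX_gt x; rewrite /tailF /prob.
rewrite (measureDI uniform01 mXgt (measurable_itv `[2^-1, +oo[)).
rewrite setDE setCitvr fineD ?fin_num_measure //; try exact: measurableI.
by rewrite -!/(prob _ _) prob_cexX_gt_left // prob_cexX_gt_right //; lra.
Qed.

Lemma tailF_cexX_gt0 (x : R) : 0 < tailF uniform01 cexX x.
Proof.
have x'_ge : ln 2 <= Num.max x (ln 2) by rewrite le_max lexx orbT.
have x_le : x <= Num.max x (ln 2) by rewrite le_max lexx.
apply: lt_le_trans (tailF_le uniform01 measurable_cexX x_le).
by rewrite tailF_cexX // expR_gt0.
Qed.

Lemma cexY_level1 : \forall t \near 0^'+,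
  [set w | 1 <= cexY w < 1 + t] = `]-oo, 2^-1[%classic.
Proof.
near=> t.
have t0 : 0 < t by near: t; exact: nbhs_right_gt.
have t1 : t < 1 by near: t; exact: nbhs_right_lt.
by apply/seteqP; split => w /=; rewrite in_itv /= /cexY; case: ltP => //= _; lra.
Unshelve. all: by end_near.
Qed.

Lemma cexY_level2 : \forall t \near 0^'+,
  [set w | 2 <= cexY w < 2 + t] = `[2^-1, +oo[%classic.
Proof.
near=> t.
have t0 : 0 < t by near: t; exact: nbhs_right_gt.
by apply/seteqP; split => w /=; rewrite in_itv /= /cexY; case: ltP => //= _; lra.
Unshelve. all: by end_near.
Qed.

Lemma DY_cexY y : DY uniform01 cexY y -> y = 1 \/ y = 2.
Proof.
move=> Dy; have [->|y1] := eqVneq y 1; first by left.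
have [->|y2] := eqVneq y 2; first by right.
pose e := Num.min `|y - 1| `|y - 2|.
have e0 : 0 < e by rewrite lt_min !normr_gt0 !subr_eq0 y1 y2.
have [w] := DY_near_range Dy e0.
by rewrite /cexY distrC; case: ifP => _; rewrite lt_min ltxx // andbF.
Qed.

Lemma cexY_level_sets y : DY uniform01 cexY y -> exists B : set R,
  [/\ \forall t \near 0^'+, [set w | y <= cexY w < y + t] = B,
      prob uniform01 B = 2^-1 &
      forall x, ln 2 <= x -> prob uniform01 ([set w | x < cexX w] `&` B) = expR (- x) / 2].
Proof.
case/DY_cexY => ->.
- exists `]-oo, 2^-1[%classic; split; first exact: cexY_level1.
    by rewrite /prob uniform01_lt_half.
  exact: prob_cexX_gt_left.
- exists `[2^-1, +oo[%classic; split; first exact: cexY_level2.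
    by rewrite /prob uniform01_ge_half.
  exact: prob_cexX_gt_right.
Qed.

Lemma CD_cex : CD uniform01 cexX cexY (fun=> 1).
Proof.
have PB0 (B : set R) : prob uniform01 B = 2^-1 -> 0 < prob uniform01 B by move=> ->.
split; first exact: measurable_cst.
split; first by [].
split=> [x y /cexY_level_sets[B [levelB /PB0 PB _]]|e e0].
  exact: (cond_tail_level_near_cst (P := uniform01) cexX x levelB PB).1.
exists (ln 2) => x /ltW x_ge y /cexY_level_sets[B [levelB PB PXB]].
rewrite (cond_tail_level_near_cst (P := uniform01) cexX x levelB (PB0 _ PB)).2.
rewrite PXB // PB tailF_cexX // mulr1 (_ : _ - 1 = 0) ?normr0 ?ltW //.
by field; rewrite gt_eqF ?expR_gt0.
Qed.

Lemma standing_cex : standing uniform01 cexX cexY.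
Proof.
split; first exact: measurable_cexX.
split; first exact: measurable_cexY.
split; first exact: tailF_cexX_gt0.
by move=> w; rewrite /cexY; case: ifP.
Qed.

Lemma cexX_ge0 (w : R) : 0 <= w -> w < 3 / 4 -> 0 <= cexX w.
Proof.
move=> w0 w34; rewrite /cexX ifF ?oppr_ge0; last by rewrite leNgt w34.
apply: ln_le0.
by rewrite ler_norml; apply/andP; split; lra.
Qed.

Lemma not_indep_cex : ~ indep uniform01 cexX cexY.
Proof.
move=> XY.
have mXneg : measurable (cexX @^-1` `]-oo, 0[%classic).
  by rewrite -[X in measurable X]setTI; exact: measurable_cexX.
have Ylt : cexY @^-1` `]-oo, 3 / 2[%classic = `]-oo, 2^-1[%classic.
  by apply/seteqP; split => w /=; rewrite !in_itv /= /cexY; case: (ltP w 2^-1); lra.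
have joint0 : uniform01 (cexX @^-1` `]-oo, 0[%classic `&` `]-oo, 2^-1[%classic) = 0%E.
  rewrite uniform01E; last exact: measurableI.
  rewrite -[X in lebesgue_measure X](_ : set0 = _) ?measure0 //.
  apply/seteqP; split => // w /=; rewrite !in_itv /= => -[[X_neg w_lt] /andP[w0 _]].
  by have := cexX_ge0 w0 (lt_trans w_lt _); lra.
have Xneg : uniform01 (cexX @^-1` `]-oo, 0[%classic) = (1 - 3 / 4)%:E.
  apply: (uniform01_itv (b1:=true) (b2:=false)) => //; last by lra.
  apply/seteqP; split => w /=; rewrite !in_itv /=.
    move=> [X_neg /andP[w0 ->]]; rewrite andbT leNgt; apply/negP => w34.
    by have := cexX_ge0 w0 w34; lra.
  move=> /andP[w34 w1]; split; last by apply/andP; split; lra.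
  by rewrite /cexX w34; lra.
have := XY _ _ (measurable_itv `]-oo, 0[) (measurable_itv `]-oo, 3 / 2[).
by rewrite Ylt joint0 Xneg uniform01_lt_half -EFinM => -[]; lra.
Qed.

End counterexample.

Theorem proposition2p6 (R : realType) :
  (forall (d : measure_display) (T : measurableType d)
          (P : probability T R) (X Y : T -> R) (s : R -> R),
      standing P X Y -> CD P X Y s -> indep P X Y ->
      forall y, DY P Y y -> s y = 1) /\
  (exists (d : measure_display) (T : measurableType d)
          (P : probability T R) (X Y : T -> R) (s : R -> R),
      standing P X Y /\ CD P X Y s /\
      (forall y, DY P Y y -> s y = 1) /\ ~ indep P X Y).
Proof.
split; first by move=> d T P X Y s; exact: indep_CD_eq1.
exists _, _, (@uniform01 R), cexX, cexY, (fun=> 1).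
split; first exact: standing_cex.
split; first exact: CD_cex.
by split; last exact: not_indep_cex.
Qed.
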